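(* Let $X$ be a real $n\times p$ matrix ($p<n$) of full rank with rows $x_1^\top,\dots,x_n^\top$, let $y\in\mathbb{R}^n$, $\sigma>0$, and $$\psi(g,b)=\sigma\|y-Xg-b\|_1+\tfrac12\|b\|_2^2,\qquad (g,b)\in\mathbb{R}^p\times\mathbb{R}^n.$$ Then: (i) $(\hat g,\hat b)$ minimizes $\psi$ if and only if $X^\top\hat b=0$ and, for every $i\in\{1,\dots,n\}$, $$\hat b_i=\begin{cases}\sigma,&\text{if } y_i-x_i^\top\hat g>\sigma,\\ y_i-x_i^\top\hat g,&\text{if } y_i-x_i^\top\hat g\in[-\sigma,\sigma],\\ -\sigma,&\text{if } y_i-x_i^\top\hat g<-\sigma;\end{cases}$$ in particular $\|\hat b\|_\infty\leq\sigma$ for any minimizer. (ii) The Lagrangian dual of the problem $\min\psi$ is $\gamma:=\max_{u\in\sigma P^*}\big(u^\top y-\tfrac12\|u\|_2^2\big)$, where $P^*=\{u\in\ker X^\top : \|u\|_\infty\leq 1\}$, and $\min_{(g,b)\in\mathbb{R}^p\times\mathbb{R}^n}\psi(g,b)=\gamma$. *)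

From mathcomp Require Import all_boot all_order all_algebra.
From mathcomp Require Import reals.
Set Implicit Arguments. Unset Strict Implicit. Unset Printing Implicit Defensive.
Import Order.TTheory GRing.Theory Num.Theory.
Local Open Scope ring_scope.

Section Defs.
Variables (R : realType) (n p : nat).

Definition norm1 (v : 'cV[R]_n) : R := \sum_(i < n) `|v i 0|.
Definition sqnorm2 (v : 'cV[R]_n) : R := \sum_(i < n) (v i 0) ^+ 2.
Definition dotv (u v : 'cV[R]_n) : R := \sum_(i < n) u i 0 * v i 0.

Definition psi (X : 'M[R]_(n, p)) (y : 'cV[R]_n) (sigma : R)
  (g : 'cV[R]_p) (b : 'cV[R]_n) : R :=
  sigma * norm1 (y - X *m g - b) + 2^-1 * sqnorm2 b.

Definition in_sigmaPstar (X : 'M[R]_(n, p)) (sigma : R) (u : 'cV[R]_n) : Prop :=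
  X^T *m u = 0 /\ forall i : 'I_n, `|u i 0| <= sigma.

Definition dual_obj (y : 'cV[R]_n) (u : 'cV[R]_n) : R :=
  dotv u y - 2^-1 * sqnorm2 u.

(* Lagrangian of  min sigma||r||_1 + 1/2||b||^2  s.t.  r = y - X g - b,
   with multiplier u for the equality constraint. *)
Definition lagrangian (X : 'M[R]_(n, p)) (y : 'cV[R]_n) (sigma : R)
  (g : 'cV[R]_p) (b r : 'cV[R]_n) (u : 'cV[R]_n) : R :=
  sigma * norm1 r + 2^-1 * sqnorm2 b + dotv u (y - X *m g - b - r).

End Defs.

(* For a fixed residual t = y_i - x_i^T g, the map b |-> s |t - b| + b^2/2 is
   1-strongly convex with minimiser clip_s(t), the projection of t onto [-s, s];
   hence psi(g, b) >= H(g) + ||b - clip_s(y - X g)||^2 / 2, where H is the Huber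
   loss, and at a minimiser b is the clipped residual.  Moving (g, b) along
   (t v, - t X v) with v = X^T b keeps y - X g - b fixed and changes psi by
   - t ||v||^2 + O(t^2), so X^T b = 0 at a minimiser.  For u in sigma P^* the
   Lagrangian is bounded below termwise by u^T y - ||u||^2/2, with equality at the
   clipped residual; this gives both the sufficiency in (i) and strong duality.
   A minimiser exists because H is continuous and, X having full column rank,
   coercive. *)

From Pilot Require Import Defs.
From mathcomp Require Import all_boot all_order all_algebra.
From mathcomp Require Import reals ring lra.
From mathcomp Require Import boolp classical_sets topology normedtype derive.
Import Order.TTheory GRing.Theory Num.Theory.
Import numFieldNormedType.Exports.
Set Implicit Arguments.
Unset Strict Implicit.
Unset Printing Implicit Defensive.

Local Open Scope ring_scope.

Section RealField.
Variable R : realFieldType.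
Implicit Types a c k s t u r w : R.

Lemma mul_le_scaled_norm s u r : `|u| <= s -> u * r <= s * `|r|.
Proof.
move=> us; apply: le_trans (ler_norm _) _.
by rewrite normrM ler_wpM2r.
Qed.

Lemma le0_of_le_scaled a w : (forall t, 0 < t -> a <= t * w) -> a <= 0.
Proof.
move=> h; apply/ler_addgt0Pr => e e0; rewrite add0r.
have w1 : 0 < `|w| + 1 by rewrite ltr_wpDl.
apply: le_trans (h _ (divr_gt0 e0 w1)) _.
have : e / (`|w| + 1) * w <= e / (`|w| + 1) * (`|w| + 1).
  by rewrite ler_pM2l ?divr_gt0 //; have := ler_norm w; lra.
by rewrite mulfVK // gt_eqF.
Qed.

Lemma exists_sub_mul_lt a c k : 0 < k -> exists2 t : R, 0 <= t & a - t * k < c.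
Proof.
move=> k0; have := ler_norm a; have := ler_norm (- c); rewrite normrN => hc ha.
exists ((`|a| + `|c| + 1) / k); last by rewrite divfK ?gt_eqF //; lra.
by apply: divr_ge0 _ (ltW k0); have := normr_ge0 a; have := normr_ge0 c; lra.
Qed.

Lemma ler_sum_term (I : finType) (F : I -> R) (i : I) :
  (forall j, 0 <= F j) -> F i <= \sum_j F j.
Proof. by move=> F0; rewrite (bigD1 i) //= lerDl sumr_ge0. Qed.

End RealField.

Section Clip.
Variable R : realFieldType.
Implicit Types s t b u r : R.

Definition clip s t : R := Num.max (- s) (Num.min s t).

(* The minimum over b of s |t - b| + b^2/2, attained at b = clip s t. *)
Definition huber s t : R := s * `|t - clip s t| + clip s t ^+ 2 / 2.

Variant clip_spec s t : R -> Prop :=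
  | ClipAbove of s < t : clip_spec s t s
  | ClipInside of - s <= t <= s : clip_spec s t t
  | ClipBelow of t < - s : clip_spec s t (- s).

Lemma clipP s t : 0 <= s -> clip_spec s t (clip s t).
Proof.
move=> s0; rewrite /clip.
have [st|ts] := ltrP s t; first by rewrite max_r; [constructor|lra].
have [tNs|Nst] := ltrP t (- s); first by constructor.
by constructor; apply/andP.
Qed.

Lemma eq_clip_cases s r b : 0 <= s ->
  (s < r -> b = s) /\ (- s <= r <= s -> b = r) /\ (r < - s -> b = - s)
  <-> b = clip s r.
Proof.
move=> s0; case: clipP => // h; split=> [[hs [hm hl]]|->].
- exact: hs.
- by do ![split] => // ?; lra.
- exact: hm.
- by case/andP: h => h1 h2; do ![split] => // ?; lra.
- exact: hl.
- by do ![split] => // ?; lra.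
Qed.

Lemma norm_clip_le s t : 0 <= s -> `|clip s t| <= s.
Proof.
move=> s0; case: clipP => // [_|h|_].
- by rewrite ger0_norm.
- by rewrite ler_norml.
- by rewrite normrN ger0_norm.
Qed.


Lemma mul_norm_sub_clip s t : 0 <= s ->
  s * `|t - clip s t| = clip s t * (t - clip s t).
Proof.
move=> s0; case: clipP => // h.
- by rewrite ger0_norm // subr_ge0 ltW.
- by rewrite subrr normr0 !mulr0.
- by rewrite ltr0_norm ?mulrN ?mulNr // subr_lt0.
Qed.

Lemma huber_ge s t : 0 <= s -> s * (`|t| - s) <= huber s t.
Proof.
move=> s0; rewrite /huber.
have : `|t| <= `|t - clip s t| + `|clip s t| by rewrite -[X in `|X|](subrK (clip s t)) ler_normD.
have := norm_clip_le t s0; have := sqr_ge0 (clip s t); nra.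
Qed.

Lemma huber_le s t b : 0 <= s ->
  huber s t + (b - clip s t) ^+ 2 / 2 <= s * `|t - b| + b ^+ 2 / 2.
Proof.
move=> s0; rewrite /huber mul_norm_sub_clip //.
have := mul_le_scaled_norm (t - b) (norm_clip_le t s0); nra.
Qed.

Lemma lagrangian_term_ge s u r b : `|u| <= s ->
  - (u ^+ 2 / 2) <= s * `|r| + b ^+ 2 / 2 - u * b - u * r.
Proof.
move=> us; have := mul_le_scaled_norm r us; have := sqr_ge0 (b - u); nra.
Qed.


Lemma huber_clipE s t : 0 <= s -> huber s t = clip s t * t - clip s t ^+ 2 / 2.
Proof. by move=> s0; rewrite /huber mul_norm_sub_clip //; field. Qed.


End Clip.

Section Vectors.
Variable R : realType.

Lemma dotv_mulmx m k (A : 'M[R]_(m, k)) (u : 'cV[R]_m) (d : 'cV[R]_k) :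
  dotv u (A *m d) = dotv (A^T *m u) d.
Proof.
rewrite /dotv; under eq_bigr do rewrite mxE mulr_sumr.
rewrite exchange_big; apply: eq_bigr => j _; rewrite mxE mulr_suml.
by apply: eq_bigr => i _; rewrite mxE; ring.
Qed.

Lemma dotvZr m (u v : 'cV[R]_m) t : dotv u (t *: v) = t * dotv u v.
Proof. by rewrite /dotv mulr_sumr; apply: eq_bigr => i _; rewrite mxE; ring. Qed.

Lemma dotvv m (v : 'cV[R]_m) : dotv v v = sqnorm2 v.
Proof. by apply: eq_bigr => i _; rewrite expr2. Qed.

Lemma sqnorm2_ge0 m (v : 'cV[R]_m) : 0 <= sqnorm2 v.
Proof. by apply: sumr_ge0 => i _; exact: sqr_ge0. Qed.

Lemma sqnorm2_0 m : sqnorm2 (0 : 'cV[R]_m) = 0.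
Proof. by rewrite /sqnorm2 big1 // => i _; rewrite mxE expr0n. Qed.

Lemma sqnorm2_eq0 m (v : 'cV[R]_m) : sqnorm2 v = 0 -> v = 0.
Proof.
move=> v0; apply/matrixP => i j; rewrite (ord1 j) mxE.
have /eqP := psumr_eq0P (fun i _ => sqr_ge0 (v i 0)) v0 (i := i) isT.
by rewrite sqrf_eq0 => /eqP.
Qed.

Lemma sqnorm2_subZ m (b w : 'cV[R]_m) t :
  sqnorm2 (b - t *: w) = sqnorm2 b - 2 * t * dotv b w + t ^+ 2 * sqnorm2 w.
Proof.
rewrite /sqnorm2 /dotv !mulr_sumr -sumrB -big_split /=.
by apply: eq_bigr => i _; rewrite !mxE; ring.
Qed.

Lemma dotvBr m (u v w : 'cV[R]_m) : dotv u (v - w) = dotv u v - dotv u w.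
Proof. by rewrite /dotv -sumrB; apply: eq_bigr => i _; rewrite !mxE; ring. Qed.

Lemma dotv0r m (u : 'cV[R]_m) : dotv u 0 = 0.
Proof. by rewrite /dotv big1 // => i _; rewrite mxE mulr0. Qed.

Lemma dotv0l m (v : 'cV[R]_m) : dotv 0 v = 0.
Proof. by rewrite /dotv big1 // => i _; rewrite mxE mul0r. Qed.

Lemma norm1_0 m : norm1 (0 : 'cV[R]_m) = 0.
Proof. by rewrite /norm1 big1 // => i _; rewrite mxE normr0. Qed.

Lemma norm1Z m (v : 'cV[R]_m) t : norm1 (t *: v) = `|t| * norm1 v.
Proof. by rewrite /norm1 mulr_sumr; apply: eq_bigr => i _; rewrite mxE normrM. Qed.

Lemma norm1_delta m (i : 'I_m) : norm1 (delta_mx i 0 : 'cV[R]_m) = 1.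
Proof.
rewrite /norm1 (bigD1 i) //= big1 => [|j ji]; first by rewrite mxE !eqxx normr1 addr0.
by rewrite mxE (negbTE ji) normr0.
Qed.

Lemma dotv_delta m (u : 'cV[R]_m) i : dotv u (delta_mx i 0) = u i 0.
Proof.
rewrite /dotv (bigD1 i) //= big1 => [|j ji]; first by rewrite mxE !eqxx mulr1 addr0.
by rewrite mxE (negbTE ji) mulr0.
Qed.

Lemma norm1_ge0 m (v : 'cV[R]_m) : 0 <= norm1 v.
Proof. by apply: sumr_ge0 => i _; exact: normr_ge0. Qed.

Lemma norm1B_le m (v w : 'cV[R]_m) : norm1 (v - w) <= norm1 v + norm1 w.
Proof.
rewrite /norm1 -big_split /=; apply: ler_sum => i _.
by rewrite !mxE; exact: ler_normB.
Qed.


Lemma coord_le_norm1_mulmx m k (A : 'M[R]_(m, k)) : \rank A = k ->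
  exists2 K : R, 0 < K & forall (g : 'cV[R]_k) j, `|g j 0| <= K * norm1 (A *m g).
Proof.
move=> rkA; have /row_fullP [B BA] : row_full A by rewrite /row_full rkA.
pose K := 1 + \sum_j \sum_i `|B j i|.
have rowB_ge0 j : 0 <= \sum_i `|B j i| by apply: sumr_ge0 => i _; exact: normr_ge0.
have K_ge j i : `|B j i| <= K.
  apply: ler_wpDl ler01 _; apply: le_trans _ (ler_sum_term j rowB_ge0).
  by apply: ler_sum_term => i'; exact: normr_ge0.
exists K => [|g j]; first by rewrite ltr_wpDr // sumr_ge0.
have gE : g = B *m (A *m g) by rewrite mulmxA BA mul1mx.
rewrite {1}gE mxE /norm1 mulr_sumr; apply: le_trans (ler_norm_sum _ _ _) _.
by apply: ler_sum => i _; rewrite normrM; apply: ler_wpM2r.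
Qed.

End Vectors.

Section Continuity.
Variable R : realType.

Lemma continuous_clip (s : R) : continuous (clip s : R -> R).
Proof.
move=> x; apply: (@continuous_max _ _ (fun=> - s) (Num.min s)); first exact: cvg_cst.
by apply: (@continuous_min _ _ (fun=> s) id); [exact: cvg_cst|exact: cvg_id].
Qed.

Lemma continuous_huber (s : R) : continuous (huber s : R -> R).
Proof.
move=> x; apply: cvgD.
  apply: cvgM; first exact: cvg_cst.
  by apply: cvg_norm; apply: cvgB; [exact: cvg_id|exact: continuous_clip].
by apply: cvgM; [apply: cvgM|exact: cvg_cst]; exact: continuous_clip.
Qed.

Lemma continuous_sum (T : topologicalType) (I : finType) (f : I -> T -> R) :
  (forall i, continuous (f i)) -> continuous (fun x => \sum_i f i x).
Proof. by move=> fc; apply: continuous_big => //; exact: add_continuous. Qed.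

End Continuity.

Lemma exists_argmin_coercive (R : realType) p (F : 'rV[R]_p -> R) (r : R) :
  0 <= r -> continuous F -> (forall (v : 'rV[R]_p) j, r < `|v ord0 j| -> F 0 < F v) ->
  exists c : 'rV[R]_p, forall v, F c <= F v.
Proof.
move=> r0 Fc Fcoer.
pose box := [set v : 'rV[R]_p | forall j, `[- r, r]%classic (v ord0 j)]%classic.
have boxP (v : 'rV[R]_p) : v \in box <-> forall j, `|v ord0 j| <= r.
  by rewrite in_setE; split=> vb j; have := vb j; rewrite /= in_itv /= ler_norml.
have box0 : 0 \in box by apply/boxP => j; rewrite mxE normr0.
have box_compact : compact box.
  by apply: (@rV_compact _ _ (fun=> `[- r, r]%classic)) => _; exact: segment_compact.
have [c _ cmin] := EVT_min_rV (ex_intro _ 0 (set_mem box0)) box_compact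
  (continuous_subspaceT Fc).
exists c => v; case/boolP: [forall j, `|v ord0 j| <= r] => [/forallP vb|/forallPn [j]].
  by apply: cmin; exact/boxP.
by rewrite -ltNge => /(Fcoer v) /ltW; exact: le_trans (cmin 0 box0).
Qed.

Section Primal.
Variables (R : realType) (n p : nat) (X : 'M[R]_(n, p)) (y : 'cV[R]_n) (s : R).
Hypothesis s_gt0 : 0 < s.

Local Notation psi := (psi X y s).
Local Notation resid g i := (y i 0 - (X *m g) i 0).

Definition is_minimizer (gh : 'cV[R]_p) (bh : 'cV[R]_n) :=
  forall g b, psi gh bh <= psi g b.

Definition shrink (g : 'cV[R]_p) : 'cV[R]_n := \col_i clip s (resid g i).

Definition huber_loss (g : 'cV[R]_p) : R := \sum_i huber s (resid g i).

Lemma psiE g b : psi g b = \sum_i (s * `|resid g i - b i 0| + b i 0 ^+ 2 / 2).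
Proof.
rewrite /Defs.psi /norm1 /sqnorm2 !mulr_sumr -big_split /=.
by apply: eq_bigr => i _; rewrite !mxE; ring.
Qed.

Lemma psi_shrink g : psi g (shrink g) = huber_loss g.
Proof. by rewrite psiE; apply: eq_bigr => i _; rewrite !mxE. Qed.

Lemma psi_ge_huber_loss g b :
  huber_loss g + 2^-1 * sqnorm2 (b - shrink g) <= psi g b.
Proof.
rewrite psiE /huber_loss /sqnorm2 mulr_sumr -big_split /=; apply: ler_sum => i _.
rewrite !mxE mulrC; exact: huber_le _ _ (ltW s_gt0).
Qed.

Lemma minimizer_shrink gh bh : is_minimizer gh bh -> bh = shrink gh.
Proof.
move=> hmin; apply/eqP; rewrite -subr_eq0; apply/eqP/sqnorm2_eq0/eqP.
rewrite eq_le sqnorm2_ge0 andbT.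
have := le_trans (psi_ge_huber_loss gh bh) (hmin gh (shrink gh)).
by rewrite psi_shrink; lra.
Qed.

Lemma psi_perturb g b v t :
  psi (g + t *: v) (b - t *: (X *m v)) =
  psi g b - t * dotv (X^T *m b) v + t ^+ 2 / 2 * sqnorm2 (X *m v).
Proof.
rewrite /Defs.psi.
have -> : y - X *m (g + t *: v) - (b - t *: (X *m v)) = y - X *m g - b.
  by rewrite mulmxDr -scalemxAr; apply/matrixP => i j; rewrite !mxE; ring.
by rewrite sqnorm2_subZ -dotv_mulmx; field.
Qed.

Lemma minimizer_ker gh bh : is_minimizer gh bh -> X^T *m bh = 0.
Proof.
move=> hmin; set v := X^T *m bh.
apply: sqnorm2_eq0; apply/eqP; rewrite eq_le sqnorm2_ge0 andbT.
apply: (le0_of_le_scaled (w := sqnorm2 (X *m v) / 2)) => t t0.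
have := hmin (gh + t *: v) (bh - t *: (X *m v)).
rewrite psi_perturb -/v dotvv => h.
rewrite -(ler_pM2l t0); nra.
Qed.

Local Notation lagrangian := (lagrangian X y s).

Lemma lagrangianE g b r u : lagrangian g b r u =
  dotv u y - dotv (X^T *m u) g + (s * norm1 r + 2^-1 * sqnorm2 b - dotv u b - dotv u r).
Proof. by rewrite /Defs.lagrangian !dotvBr dotv_mulmx; lra. Qed.

Lemma lagrangian_residual g b u : lagrangian g b (y - X *m g - b) u = psi g b.
Proof. by rewrite /Defs.lagrangian subrr dotv0r addr0. Qed.

Lemma lagrangian_dual u : lagrangian 0 u 0 u = dual_obj y u.
Proof. by rewrite lagrangianE !dotv0r dotvv norm1_0 /dual_obj; lra. Qed.

Lemma dual_obj_le_lagrangian u g b r :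
  in_sigmaPstar X s u -> dual_obj y u <= lagrangian g b r u.
Proof.
move=> [Xu0 us]; rewrite lagrangianE Xu0 dotv0l subr0 /dual_obj lerD2l.
rewrite /norm1 /sqnorm2 /dotv !mulr_sumr -sumrN -big_split -!sumrB /=.
apply: ler_sum => i _; have := lagrangian_term_ge (r i 0) (b i 0) (us i); lra.
Qed.

Lemma lagrangian_unbounded u g r : lagrangian g 0 r u < dotv u y ->
  forall M, exists t, lagrangian (t *: g) 0 (t *: r) u < M.
Proof.
move=> lt_uy M; set k := dotv u y - lagrangian g 0 r u.
have k0 : 0 < k by rewrite subr_gt0.
have [t t0 ltM] := exists_sub_mul_lt (dotv u y) M k0.
exists t; move: ltM; rewrite /k !lagrangianE sqnorm2_0 norm1Z !dotvZr !dotv0r (ger0_norm t0).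
lra.
Qed.

Lemma lagrangian_lt_dotv u : ~ in_sigmaPstar X s u ->
  exists g r, lagrangian g 0 r u < dotv u y.
Proof.
move=> uP; have [Xu0|Xu_neq0] := eqVneq (X^T *m u) 0.
  case/boolP: [forall i, `|u i 0| <= s] => [/forallP us|/forallPn [i]].
    by case: uP; split.
  rewrite -ltNge => si; exists 0, (u i 0 *: delta_mx i 0).
  rewrite lagrangianE Xu0 dotv0l dotv0r sqnorm2_0 norm1Z norm1_delta dotvZr dotv_delta.
  have : s * `|u i 0| < `|u i 0| * `|u i 0| by rewrite ltr_pM2r // (lt_trans s_gt0).
  by rewrite -expr2 real_normK ?num_real // expr2; lra.
exists (X^T *m u), 0; rewrite lagrangianE dotvv sqnorm2_0 norm1_0 dotv0r.
have : 0 < sqnorm2 (X^T *m u).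
  by rewrite lt_def sqnorm2_ge0 andbT; apply: contra_neq Xu_neq0; exact: sqnorm2_eq0.
lra.
Qed.

Lemma eq_shrink_cases gh bh : bh = shrink gh <->
  forall i, let ri := resid gh i in
    (s < ri -> bh i 0 = s) /\ (- s <= ri <= s -> bh i 0 = ri) /\ (ri < - s -> bh i 0 = - s).
Proof.
split=> [-> i|bh_cases]; first by apply/eq_clip_cases; rewrite ?mxE ?ltW.
apply/matrixP => i j; rewrite ord1 mxE; apply/eq_clip_cases; first exact: ltW.
exact: bh_cases.
Qed.

Lemma huber_lossE g :
  huber_loss g = dotv (shrink g) (y - X *m g) - 2^-1 * sqnorm2 (shrink g).
Proof.
rewrite /huber_loss /dotv /sqnorm2 mulr_sumr -sumrB; apply: eq_bigr => i _.
by rewrite !mxE huber_clipE ?ltW //; lra.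
Qed.

Lemma psi_shrink_dual g :
  X^T *m shrink g = 0 -> psi g (shrink g) = dual_obj y (shrink g).
Proof.
by move=> Xc0; rewrite psi_shrink huber_lossE /dual_obj dotvBr dotv_mulmx Xc0 dotv0l subr0.
Qed.

Lemma shrink_in_sigmaPstar g : X^T *m shrink g = 0 -> in_sigmaPstar X s (shrink g).
Proof. by split=> // i; rewrite mxE; exact: norm_clip_le _ (ltW s_gt0). Qed.

Lemma minimizerP gh bh : is_minimizer gh bh <-> X^T *m bh = 0 /\ bh = shrink gh.
Proof.
split=> [hmin|[Xb0 bhE] g b].
  by split; [exact: minimizer_ker hmin|exact: minimizer_shrink].
rewrite bhE in Xb0 *; rewrite psi_shrink_dual // -(lagrangian_residual g b (shrink gh)).
exact/dual_obj_le_lagrangian/shrink_in_sigmaPstar.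
Qed.

Lemma dual_optimal gh : is_minimizer gh (shrink gh) ->
  forall u, in_sigmaPstar X s u -> dual_obj y u <= dual_obj y (shrink gh).
Proof.
move=> hmin u uP; rewrite -psi_shrink_dual ?(minimizer_ker hmin) //.
by rewrite -(lagrangian_residual gh (shrink gh) u); exact: dual_obj_le_lagrangian.
Qed.

Lemma huber_loss_ge g : s * (norm1 (y - X *m g) - n%:R * s) <= huber_loss g.
Proof.
have -> : n%:R * s = \sum_(i < n) s by rewrite sumr_const card_ord mulr_natl.
rewrite /norm1 -sumrB mulr_sumr; apply: ler_sum => i _.
by rewrite !mxE; exact: huber_ge _ (ltW s_gt0).
Qed.

Lemma huber_loss_coercive : \rank X = p ->
  exists2 r : R, 0 <= r &
    forall (g : 'cV[R]_p) j, r < `|g j 0| -> huber_loss 0 < huber_loss g.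
Proof.
move=> rkX; have [K K0 Kbound] := coord_le_norm1_mulmx rkX.
pose c := `|huber_loss 0| / s + n%:R * s + norm1 y.
have c0 : 0 <= c by rewrite /c !addr_ge0 ?norm1_ge0 ?mulr_ge0 ?invr_ge0 ?(ltW s_gt0).
exists (K * c) => [|g j lt_cg]; first by rewrite mulr_ge0 // ltW.
have tri : norm1 (X *m g) <= norm1 y + norm1 (y - X *m g).
  by rewrite -{1}(subKr y (X *m g)) norm1B_le.
have hc : c < norm1 y + norm1 (y - X *m g).
  rewrite -(ltr_pM2l K0); apply: lt_le_trans lt_cg _.
  by apply: le_trans (Kbound g j) _; rewrite ler_pM2l.
have : `|huber_loss 0| / s * s < (norm1 (y - X *m g) - n%:R * s) * s.
  by rewrite ltr_pM2r //; move: hc; rewrite /c; lra.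
rewrite divfK ?gt_eqF // mulrC => lt_h0.
exact: le_lt_trans (ler_norm _) (lt_le_trans lt_h0 (huber_loss_ge g)).
Qed.

Lemma continuous_huber_loss_rV :
  continuous (fun v : 'rV[R]_p => huber_loss v^T).
Proof.
apply: continuous_sum => i.
have -> : (fun v : 'rV[R]_p => huber s (y i 0 - (X *m v^T) i 0)) =
    huber s \o (fun v : 'rV[R]_p => y i 0 - \sum_j X i j * v ord0 j).
  by apply/funext => v /=; rewrite mxE; congr (huber s (_ - _)); apply: eq_bigr => j _; rewrite mxE.
move=> v; apply: continuous_comp; last exact: continuous_huber.
apply: (@continuousB R R^o _ (fun=> y i 0)); first exact: cst_continuous.
apply: continuous_sum => j w.
by apply: (@continuousM R _ (fun=> X i j) (fun v : 'rV[R]_p => v ord0 j)); [exact: cst_continuous|exact: coord_continuous].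
Qed.

Lemma exists_minimizer : \rank X = p -> exists gh, is_minimizer gh (shrink gh).
Proof.
move=> rkX; have [r r0 coer] := huber_loss_coercive rkX.
(* Compactness of boxes is available for row vectors, hence the transposes. *)
have [v vmin] : exists v : 'rV[R]_p, forall w, huber_loss v^T <= huber_loss w^T.
  apply: exists_argmin_coercive r0 continuous_huber_loss_rV _ => w j.
  by rewrite trmx0 => lt_rw; apply: (coer _ j); rewrite mxE.
exists v^T => g b; rewrite psi_shrink.
apply: le_trans (psi_ge_huber_loss g b); rewrite -[g]trmxK.
by apply: le_trans (vmin g^T) _; rewrite lerDl mulr_ge0 ?invr_ge0 ?sqnorm2_ge0.
Qed.

End Primal.

Theorem lemma4p3 (R : realType) (n p : nat) (X : 'M[R]_(n, p))
  (y : 'cV[R]_n) (sigma : R) :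
  (p < n)%N -> \rank X = p -> 0 < sigma ->
  (forall (gh : 'cV[R]_p) (bh : 'cV[R]_n),
     (forall g b, psi X y sigma gh bh <= psi X y sigma g b) <->
     (X^T *m bh = 0 /\
      forall i : 'I_n,
        let ri := y i 0 - (X *m gh) i 0 in
        (sigma < ri -> bh i 0 = sigma) /\
        (- sigma <= ri <= sigma -> bh i 0 = ri) /\
        (ri < - sigma -> bh i 0 = - sigma))) /\
  (forall (gh : 'cV[R]_p) (bh : 'cV[R]_n),
     (forall g b, psi X y sigma gh bh <= psi X y sigma g b) ->
     forall i : 'I_n, `|bh i 0| <= sigma) /\
  (forall u : 'cV[R]_n,
     (in_sigmaPstar X sigma u ->
        (forall g b r, dual_obj y u <= lagrangian X y sigma g b r u) /\
        exists g b r, lagrangian X y sigma g b r u = dual_obj y u) /\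
     (~ in_sigmaPstar X sigma u ->
        forall M : R, exists g b r, lagrangian X y sigma g b r u < M)) /\
  (exists (gh : 'cV[R]_p) (bh : 'cV[R]_n) (uh : 'cV[R]_n),
     (forall g b, psi X y sigma gh bh <= psi X y sigma g b) /\
     in_sigmaPstar X sigma uh /\
     (forall u, in_sigmaPstar X sigma u -> dual_obj y u <= dual_obj y uh) /\
     psi X y sigma gh bh = dual_obj y uh).
Proof.
move=> _ rkX s_gt0.
have [gh gh_min] := exists_minimizer y s_gt0 rkX.
have ker_gh := minimizer_ker gh_min.
split; [|split; [|split]].
- move=> g b; apply: iff_trans (minimizerP X y s_gt0 g b) _.
  by split=> -[Xb0 /(eq_shrink_cases _ _ s_gt0) bhE]; split.
- move=> g b /(minimizer_shrink s_gt0) -> i; rewrite mxE.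
  exact: norm_clip_le _ (ltW s_gt0).
- move=> u; split=> [uP|uP M].
    split=> [g b r|]; first exact: dual_obj_le_lagrangian.
    by exists 0, u, 0; exact: lagrangian_dual.
  have [g [r lt_uy]] := lagrangian_lt_dotv y s_gt0 uP.
  by have [t ?] := lagrangian_unbounded lt_uy M; exists (t *: g), 0, (t *: r).
- exists gh, (shrink X y sigma gh), (shrink X y sigma gh); split=> //.
  split; first exact: shrink_in_sigmaPstar.
  by split; [exact: dual_optimal|exact: psi_shrink_dual].
Qed.
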